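(* $i(\vec P_3)\leq 0.4446$ and $i(\vec C_4)\leq 0.1104$.
   Context: An orgraph (oriented graph) is a directed graph with no loops, no multiple edges, and no pair of vertices joined by edges in both directions. For a finite orgraph $\Gamma$ and an integer $n$, let $max(\Gamma;n)$ be the maximum, over all orgraphs $G$ on $n$ vertices, of the number of vertex subsets $T\subseteq V(G)$ with $|T|=|V(\Gamma)|$ such that the subgraph of $G$ induced by $T$ is isomorphic to $\Gamma$ (each such set is counted once, regardless of automorphisms of $\Gamma$). The inducibility of $\Gamma$ is $i(\Gamma):=\limsup_{n\to\infty} max(\Gamma;n)/\binom{n}{|V(\Gamma)|}$. Here $\vec P_3$ is the orgraph on vertices $a,b,c$ with edges $a\to b$ and $b\to c$ only (directed path with 3 vertices), and $\vec C_4$ is the orgraph on vertices $v_1,v_2,v_3,v_4$ with edges $v_1\to v_2$, $v_2\to v_3$, $v_3\to v_4$, $v_4\to v_1$ only (directed 4-cycle). *)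

From HB Require Import structures.
From mathcomp Require Import all_boot all_order all_algebra.
From mathcomp Require Import all_classical all_reals all_analysis.
Set Implicit Arguments. Unset Strict Implicit. Unset Printing Implicit Defensive.
Import Order.TTheory GRing.Theory Num.Theory.

(* An orgraph on vertex set 'I_n is given by its set of directed edges
   (ordered pairs); it must have no loops and no pair of opposite edges.
   Multiple edges are impossible since edges form a set. *)
Definition digraph (n : nat) := {set 'I_n * 'I_n}.

Definition is_orgraph (n : nat) (G : digraph n) : bool :=
  [forall i : 'I_n, forall j : 'I_n,
     ((i, j) \in G) ==> ((i != j) && ((j, i) \notin G))].

Definition induces_copy (k n : nat) (Gam : digraph k) (G : digraph n)
  (T : {set 'I_n}) : bool :=
  [exists f : {ffun 'I_k -> 'I_n},
     [&& injectiveb f, (f @: [set: 'I_k]) == T &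
      [forall i : 'I_k, forall j : 'I_k, ((f i, f j) \in G) == ((i, j) \in Gam)]]].

Definition ind_count (k n : nat) (Gam : digraph k) (G : digraph n) : nat :=
  #|[set T : {set 'I_n} | (#|T| == k) && induces_copy Gam G T]|.

Definition max_ind (k : nat) (Gam : digraph k) (n : nat) : nat :=
  \max_(G : digraph n | is_orgraph G) ind_count Gam G.

Local Open Scope ring_scope.
Local Open Scope ereal_scope.

Definition inducibility (R : realType) (k : nat) (Gam : digraph k) : \bar R :=
  limn_esup (fun n : nat => ((max_ind Gam n)%:R / ('C(n, k))%:R : R)%:E).

Definition P3 : digraph 3 := [set ((inord 0 : 'I_3), (inord 1 : 'I_3));
                                  ((inord 1 : 'I_3), (inord 2 : 'I_3))].

Definition C4 : digraph 4 := [set ((inord 0 : 'I_4), (inord 1 : 'I_4));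
                                  ((inord 1 : 'I_4), (inord 2 : 'I_4));
                                  ((inord 2 : 'I_4), (inord 3 : 'I_4));
                                  ((inord 3 : 'I_4), (inord 0 : 'I_4))].

From Stdlib Require Import ZArith Lia.
From HB Require Import structures.
From mathcomp Require Import all_boot all_order all_algebra perm zify.
From mathcomp Require Import all_classical all_reals all_analysis.
Set Implicit Arguments. Unset Strict Implicit. Unset Printing Implicit Defensive.
Import Order.TTheory GRing.Theory Num.Theory.

(* A flag-algebra certificate, verified by computation.  Record the arcs
   between two vertices of an orgraph as a type in {0, 1, 2}.  For a 4-tuple w
   of vertices let F(w) = 60000 [w realises the target pattern] + Q(w), where
   Q(w) is a quadratic form with nonnegative weights evaluated at the types of
   w2 and of w3 relative to the pair (w0, w1).  Summed over w2 and w3, Q is a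
   sum of squares, so its total over all tuples is nonnegative.  A check of
   the 3^6 configurations of pair types shows that the sum of F over the 24
   relabellings of a tuple is at most L, whence
   24 * 60000 * #(pattern tuples) <= L n^4.  An induced P3 yields n pattern
   tuples (any fourth vertex) and an induced C4 yields 4 (its rotations), so
   max(P3; n) <= 0.0680 n^3 and max(C4; n) <= 0.0043 n^4, i.e. the densities
   are eventually below 0.4075 and 0.1031. *)

(* ZArith is imported before MathComp so that the nat notations stay those of
   ssrnat, but ssrint has taken the %Z key: give it back to ZArith, whose
   binary integers carry all exact arithmetic below (large nat literals are
   opaque to lia). *)
Delimit Scope Z_scope with Z.

HB.instance Definition _ :=
  Monoid.isComLaw.Build Z 0%Z Z.add Z.add_assoc Z.add_comm Z.add_0_l.
HB.instance Definition _ := Monoid.isMulLaw.Build Z 0%Z Z.mul Z.mul_0_l Z.mul_0_r.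
HB.instance Definition _ :=
  Monoid.isAddLaw.Build Z Z.mul Z.add Z.mul_add_distr_r Z.mul_add_distr_l.

Notation "\zsum_ ( i <- r ) F" := (\big[Z.add/0%Z]_(i <- r) F)
  (at level 41, F at level 41, i, r at level 50).
Notation "\zsum_ ( i : t ) F" := (\big[Z.add/0%Z]_(i : t) F)
  (at level 41, F at level 41, i at level 50).

Lemma zsum_le (I : Type) (r : seq I) (P : pred I) (F1 F2 : I -> Z) :
  (forall i, P i -> (F1 i <= F2 i)%Z) ->
  (\big[Z.add/0%Z]_(i <- r | P i) F1 i <= \big[Z.add/0%Z]_(i <- r | P i) F2 i)%Z.
Proof.
move=> le12; apply: (big_ind2 (fun x y => (x <= y)%Z)) => [|x1 x2 y1 y2|i /le12] //; lia.
Qed.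

Lemma zsum_ge0 (I : Type) (r : seq I) (P : pred I) (F : I -> Z) :
  (forall i, P i -> (0 <= F i)%Z) -> (0 <= \big[Z.add/0%Z]_(i <- r | P i) F i)%Z.
Proof.
move=> F_ge0; apply: (big_ind (fun x => (0 <= x)%Z)) => [|x y|i /F_ge0] //; lia.
Qed.

Lemma zsum_const (I : Type) (r : seq I) (c : Z) :
  \zsum_(i <- r) c = (Z.of_nat (size r) * c)%Z.
Proof.
elim: r => [|x r IHr]; first by rewrite big_nil.
by rewrite big_cons IHr (Nat2Z.inj_succ (size r)); lia.
Qed.

Lemma zsum_split (I : Type) (r : seq I) (F1 F2 : I -> Z) :
  \zsum_(i <- r) (F1 i + F2 i)%Z = (\zsum_(i <- r) F1 i + \zsum_(i <- r) F2 i)%Z.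
Proof. exact: big_split. Qed.

Lemma zsum_distrr (I : Type) (r : seq I) (a : Z) (F : I -> Z) :
  (a * \zsum_(i <- r) F i)%Z = \zsum_(i <- r) (a * F i)%Z.
Proof. exact: big_distrr. Qed.

Lemma zsum_card_const (I : finType) (c : Z) : \zsum_(i : I) c = (Z.of_nat #|I| * c)%Z.
Proof. by rewrite zsum_const [index_enum _]unlock -enumT -cardT. Qed.

Lemma zsum_card (T : finType) (A : {set T}) :
  Z.of_nat #|A| = \zsum_(x : T) Z.b2z (x \in A).
Proof.
rewrite -sum1_card big_mkcond (big_morph Z.of_nat Nat2Z.inj_add erefl).
by apply: eq_bigr => x _; case: (x \in A).
Qed.

Lemma foldr_zsum (I : Type) (s : seq I) (F : I -> Z) :
  foldr (fun x acc => (F x + acc)%Z) 0%Z s = \zsum_(x <- s) F x.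
Proof. by elim: s => [|x s IHs]; rewrite ?big_nil ?big_cons //= IHs. Qed.

Lemma zsum_square_ge0 (X : finType) (m : Z) (u : X -> Z) : (0 <= m)%Z ->
  (0 <= \zsum_(c : X) \zsum_(d : X) (m * u c * u d))%Z.
Proof.
move=> m_ge0; set s := \zsum_(c : X) u c.
have -> : \zsum_(c : X) \zsum_(d : X) (m * u c * u d)%Z = (m * (s * s))%Z.
  rewrite Z.mul_assoc /s (big_distrr m) big_distrl; apply: eq_bigr => c _ /=.
  by rewrite big_distrr.
by apply: Z.mul_nonneg_nonneg => //; apply: Z.square_nonneg.
Qed.

Lemma zsum_quadratic_ge0 (X : finType) (B : seq (Z * seq Z)) (x : X -> nat) :
  all (fun mu => (0 <=? mu.1)%Z) B ->
  (0 <= \zsum_(c : X) \zsum_(d : X)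
          \zsum_(mu <- B) (mu.1 * nth 0%Z mu.2 (x c) * nth 0%Z mu.2 (x d)))%Z.
Proof.
under eq_bigr => c _ do rewrite exchange_big; rewrite exchange_big.
elim: B => [|mu B IHB] /=; first by rewrite big_nil.
case/andP=> /Z.leb_le m_ge0 /IHB B_ge0; rewrite big_cons.
by apply: Z.add_nonneg_nonneg => //; apply: zsum_square_ge0.
Qed.

Section BigFfun.
Variables (R : Type) (idx : R) (op : Monoid.com_law idx) (V : finType).

Lemma big_ffun4 (h : V -> V -> V -> V -> R) :
  \big[op/idx]_(w : {ffun 'I_4 -> V})
      h (w (inord 0)) (w (inord 1)) (w (inord 2)) (w (inord 3)) =
  \big[op/idx]_a \big[op/idx]_b \big[op/idx]_c \big[op/idx]_d h a b c d.
Proof.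
under [RHS]eq_bigr => a _ do under eq_bigr => b _ do rewrite pair_bigA.
under [RHS]eq_bigr => a _ do rewrite pair_bigA; rewrite pair_bigA /=.
pose g (p : V * (V * (V * V))) : {ffun 'I_4 -> V} :=
  [ffun i : 'I_4 => match nat_of_ord i with
                    | 0 => p.1 | 1 => p.2.1 | 2 => p.2.2.1 | _ => p.2.2.2 end].
pose f (w : {ffun 'I_4 -> V}) := (w (inord 0), (w (inord 1), (w (inord 2), w (inord 3)))).
have gK : cancel g f by case=> a [b [c d]]; rewrite /f /g !ffunE !inordK.
have fK : cancel f g.
  move=> w; apply/ffunP => i; rewrite /f /g ffunE.
  by case: i => [[|[|[|[|i]]]] lti] //=; congr (w _); apply: val_inj; rewrite /= inordK.
rewrite (reindex g) /=; last by exists f => p _; [apply: gK | apply: fK].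
by apply: eq_bigr => p _; rewrite /g !ffunE !inordK.
Qed.

End BigFfun.

Definition rev_type (t : nat) : nat := match t with 1 => 2 | 2 => 1 | _ => 0 end.

Section ArcTypes.
Variables (n : nat) (G : digraph n).

Definition arc_type (x y : 'I_n) : nat :=
  if (x, y) \in G then 1 else if (y, x) \in G then 2 else 0.

Definition tuple_types (w : {ffun 'I_4 -> 'I_n}) (i j : nat) : nat :=
  arc_type (w (inord i)) (w (inord j)).

Lemma arc_type_lt3 x y : arc_type x y < 3.
Proof. by rewrite /arc_type; case: ifP => //; case: ifP. Qed.

Hypothesis orG : is_orgraph G.

Lemma orgraph_arc x y : (x, y) \in G -> (x != y) && ((y, x) \notin G).
Proof. by move: orG => /forallP/(_ x)/forallP/(_ y)/implyP. Qed.

Lemma arc_type_diag x : arc_type x x = 0.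
Proof.
by rewrite /arc_type; case: ifP => [/orgraph_arc | ->]; rewrite ?eqxx.
Qed.

Lemma arc_type_sym x y : arc_type y x = rev_type (arc_type x y).
Proof.
rewrite /arc_type; case xy: ((x, y) \in G); case yx: ((y, x) \in G) => //.
by have /andP[_] := orgraph_arc xy; rewrite yx.
Qed.

End ArcTypes.

Definition config (a b c d e f : nat) (i j : nat) : nat :=
  match i, j with
  | 0, 1 => a | 1, 0 => rev_type a | 0, 2 => b | 2, 0 => rev_type b
  | 0, 3 => c | 3, 0 => rev_type c | 1, 2 => d | 2, 1 => rev_type d
  | 1, 3 => e | 3, 1 => rev_type e | 2, 3 => f | 3, 2 => rev_type f
  | _, _ => 0 end.

Lemma tuple_typesE n (G : digraph n) (w : {ffun 'I_4 -> 'I_n}) :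
  is_orgraph G -> forall i j, i < 4 -> j < 4 ->
  let t := tuple_types G w in t i j = config (t 0 1) (t 0 2) (t 0 3) (t 1 2) (t 1 3) (t 2 3) i j.
Proof.
move=> orG i j; case: i => [|[|[|[|i]]]] // _; case: j => [|[|[|[|j]]]] // _;
  by rewrite /= /tuple_types ?arc_type_diag // (arc_type_sym orG).
Qed.

Definition local4 (T : (nat -> nat -> nat) -> bool) : Prop :=
  forall g g', (forall i j, i < 4 -> j < 4 -> g i j = g' i j) -> T g = T g'.

Definition P3_types (g : nat -> nat -> nat) : bool :=
  [&& g 0 1 == 1, g 1 2 == 1 & g 0 2 == 0].

Definition C4_types (g : nat -> nat -> nat) : bool :=
  [&& g 0 1 == 1, g 1 2 == 1, g 2 3 == 1, g 3 0 == 1, g 0 2 == 0 & g 1 3 == 0].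

Lemma P3_types_local : local4 P3_types.
Proof. by move=> g g' eqg; rewrite /P3_types !eqg. Qed.

Lemma C4_types_local : local4 C4_types.
Proof. by move=> g g' eqg; rewrite /C4_types !eqg. Qed.

(* A block [[:: (m_1, v_1); ...]] encodes the quadratic form sum_k m_k v_k v_k^T
   on the nine extension types [3 * g 0 c + g 1 c] of a vertex [c] over the
   pair [(0, 1)]; the block used is selected by the type of that pair. *)
Record certificate := Certificate {
  sos_block0 : seq (Z * seq Z);
  sos_block1 : seq (Z * seq Z);
  level : Z }.

Definition sos_block (C : certificate) (s : nat) : seq (Z * seq Z) :=
  match s with 0 => sos_block0 C | 1 => sos_block1 C | _ => [::] end.

Definition ext_type (g : nat -> nat -> nat) (c : nat) : nat := 3 * g 0 c + g 1 c.

Definition sos_term (C : certificate) (g : nat -> nat -> nat) : Z :=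
  foldr (fun mu acc =>
           mu.1 * nth 0 mu.2 (ext_type g 2) * nth 0 mu.2 (ext_type g 3) + acc)%Z
        0%Z (sos_block C (g 0 1)).

Definition certificate_term T C (g : nat -> nat -> nat) : Z :=
  (60000 * Z.b2z (T g) + sos_term C g)%Z.

Definition perms4 : seq (seq nat) := permutations (iota 0 4).

Definition relabel (p : seq nat) (g : nat -> nat -> nat) (i j : nat) : nat :=
  g (nth 0 p i) (nth 0 p j).

Definition symmetrized_term T C (g : nat -> nat -> nat) : Z :=
  foldr (fun p acc => certificate_term T C (relabel p g) + acc)%Z 0%Z perms4.

Definition valid_certificate T C : bool :=
  all (fun mu => 0 <=? mu.1)%Z (sos_block0 C ++ sos_block1 C) &&
  all (fun a => all (fun b => all (fun c => all (fun d => all (fun e => all (fun f =>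
    symmetrized_term T C (config a b c d e f) <=? level C)%Z
  (iota 0 3)) (iota 0 3)) (iota 0 3)) (iota 0 3)) (iota 0 3)) (iota 0 3).

Lemma size_perms4 : size perms4 = 24.
Proof. by vm_compute. Qed.

Lemma perms4_lt p i : p \in perms4 -> i < 4 -> nth 0 p i < 4.
Proof.
rewrite mem_permutations => p_iota lti.
have : nth 0 p i \in p by rewrite mem_nth // (perm_size p_iota) size_iota.
by rewrite (perm_mem p_iota) mem_iota.
Qed.

Definition permute_tuple n (p : seq nat) (w : {ffun 'I_4 -> 'I_n}) : {ffun 'I_4 -> 'I_n} :=
  [ffun i : 'I_4 => w (inord (nth 0 p i))].

Lemma permute_tuple_inj n p : p \in perms4 -> injective (@permute_tuple n p).
Proof.
rewrite mem_permutations => p_iota w1 w2 eqw; apply/ffunP => j.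
have jp : val j \in p by rewrite (perm_mem p_iota) mem_iota /=.
have ltj : index (val j) p < 4 by rewrite -index_mem (perm_size p_iota) size_iota in jp.
have := congr1 (fun w : {ffun 'I_4 -> 'I_n} => w (inord (index (val j) p))) eqw.
by rewrite !ffunE inordK // nth_index // inord_val.
Qed.

Section CertificateBound.
Variables (T : (nat -> nat -> nat) -> bool) (C : certificate).
Hypothesis T_local : local4 T.

Lemma certificate_term_ext g g' : (forall i j, i < 4 -> j < 4 -> g i j = g' i j) ->
  certificate_term T C g = certificate_term T C g'.
Proof. by move=> eqg; rewrite /certificate_term /sos_term /ext_type (T_local eqg) !eqg. Qed.

Lemma symmetrized_termE g :
  symmetrized_term T C g = \zsum_(p <- perms4) certificate_term T C (relabel p g).
Proof. exact: foldr_zsum. Qed.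

Lemma symmetrized_term_ext g g' : (forall i j, i < 4 -> j < 4 -> g i j = g' i j) ->
  symmetrized_term T C g = symmetrized_term T C g'.
Proof.
move=> eqg; rewrite !symmetrized_termE; apply: eq_big_seq => p p4.
by apply: certificate_term_ext => i j lti ltj; apply: eqg; apply: perms4_lt.
Qed.

Variables (n : nat) (G : digraph n).

Lemma sum_symmetrized_term :
  \zsum_(w : {ffun 'I_4 -> 'I_n}) symmetrized_term T C (tuple_types G w) =
  (24 * \zsum_(w : {ffun 'I_4 -> 'I_n}) certificate_term T C (tuple_types G w))%Z.
Proof.
under eq_bigr => w _ do rewrite symmetrized_termE; rewrite exchange_big /=.
rewrite (eq_big_seq (fun=> \zsum_(w : {ffun 'I_4 -> 'I_n})
                             certificate_term T C (tuple_types G w)));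
  first by rewrite zsum_const size_perms4.
move=> p p4.
rewrite [RHS](reindex_inj (permute_tuple_inj p4)); apply: eq_bigr => w _.
apply: certificate_term_ext => i j lti ltj.
by rewrite /tuple_types /relabel !ffunE !inordK.
Qed.

Hypothesis C_valid : valid_certificate T C.

Lemma sum_sos_term_ge0 : (0 <= \zsum_(w : {ffun 'I_4 -> 'I_n}) sos_term C (tuple_types G w))%Z.
Proof.
pose h a b c d := \zsum_(mu <- sos_block C (arc_type G a b))
  (mu.1 * nth 0 mu.2 (3 * arc_type G a c + arc_type G b c) *
          nth 0 mu.2 (3 * arc_type G a d + arc_type G b d))%Z.
rewrite (eq_bigr (fun w : {ffun 'I_4 -> 'I_n} =>
                    h (w (inord 0)) (w (inord 1)) (w (inord 2)) (w (inord 3))));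
  last by move=> w _; rewrite /sos_term foldr_zsum.
rewrite big_ffun4; apply: zsum_ge0 => a _; apply: zsum_ge0 => b _.
apply: zsum_quadratic_ge0.
case/andP: C_valid; rewrite all_cat => /andP[ge0 ge1] _.
by case: (arc_type G a b) => [|[|?]].
Qed.

Hypothesis orG : is_orgraph G.

Lemma symmetrized_term_le w : (symmetrized_term T C (tuple_types G w) <= level C)%Z.
Proof.
rewrite (symmetrized_term_ext (tuple_typesE w orG)).
have t3 i j : tuple_types G w i j \in iota 0 3 by rewrite mem_iota arc_type_lt3.
case/andP: C_valid => _.
move=> /allP/(_ _ (t3 0 1))/allP/(_ _ (t3 0 2))/allP/(_ _ (t3 0 3)).
by move=> /allP/(_ _ (t3 1 2))/allP/(_ _ (t3 1 3))/allP/(_ _ (t3 2 3))/Z.leb_le.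
Qed.

Lemma pattern_tuples_le :
  (24 * 60000 * Z.of_nat #|[set w : {ffun 'I_4 -> 'I_n} | T (tuple_types G w)]|
     <= Z.of_nat (n ^ 4) * level C)%Z.
Proof.
have sym_le : (\zsum_(w : {ffun 'I_4 -> 'I_n}) symmetrized_term T C (tuple_types G w)
                <= \zsum_(w : {ffun 'I_4 -> 'I_n}) level C)%Z.
  by apply: zsum_le => w _; apply: symmetrized_term_le.
rewrite sum_symmetrized_term zsum_card_const card_ffun !card_ord in sym_le.
have sum_cert : \zsum_(w : {ffun 'I_4 -> 'I_n}) certificate_term T C (tuple_types G w) =
    (60000 * (\zsum_(w : {ffun 'I_4 -> 'I_n}) Z.b2z (T (tuple_types G w))) +
     \zsum_(w : {ffun 'I_4 -> 'I_n}) sos_term C (tuple_types G w))%Z.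
  by rewrite /certificate_term zsum_split zsum_distrr.
have card_pattern : Z.of_nat #|[set w : {ffun 'I_4 -> 'I_n} | T (tuple_types G w)]| =
    \zsum_(w : {ffun 'I_4 -> 'I_n}) Z.b2z (T (tuple_types G w)).
  by rewrite zsum_card; apply: eq_bigr => w _; rewrite inE.
have := sum_sos_term_ge0; lia.
Qed.

End CertificateBound.

Section Certificates.
Local Open Scope Z_scope.

Definition P3_certificate : certificate := {|
  sos_block0 :=
    [:: (37, [:: 0; 3; 3; -3; 0; 0; -3; 0; 0]);
        (3, [:: 0; 10; 10; -10; 0; 0; -10; 0; 0]);
        (899, [:: 0; 0; 1; 0; 0; 0; -1; 0; 0]);
        (45, [:: -5; 1; 1; 1; 3; 1; 1; 1; 3]);
        (1800, [:: 0; 0; 0; 0; 0; 1; 0; -1; 0]);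
        (6757, [:: 0; 0; 0; 1; 0; 0; -1; 0; 0]);
        (27, [:: 0; -3; 3; 3; 0; 10; -3; -10; 0]);
        (111, [:: 0; -2; 2; 2; 0; 5; -2; -5; 0]);
        (4, [:: 0; 10; -10; -10; 0; 7; 10; -7; 0]);
        (25, [:: -4; -5; -5; -5; 1; 4; -5; 5; 1]);
        (18, [:: 0; 5; -5; -5; 0; 3; 5; -3; 0]);
        (51, [:: 0; 3; -3; -3; 0; 2; 3; -2; 0]);
        (52, [:: -7; -10; -10; -10; 2; 9; -10; 9; 2]);
        (1458, [:: 0; 1; 0; 0; 0; 0; -1; 0; 0]);
        (1458, [:: 0; 0; 1; -1; 0; 0; 0; 0; 0]);
        (899, [:: 0; 1; 0; -1; 0; 0; 0; 0; 0]);
        (11, [:: 0; 5; 5; -5; 0; 0; -5; 0; 0]);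
        (6757, [:: 0; 1; -1; 0; 0; 0; 0; 0; 0]);
        (307, [:: 0; -1; 1; 1; 0; 3; -1; -3; 0])];
  sos_block1 :=
    [:: (29, [:: 8; -1; 0; 0; -5; 8; -1; -10; -5]);
        (20, [:: -2; 0; -3; -3; 1; 3; 0; 0; 1]);
        (53, [:: 0; -2; -3; 3; 5; 0; 2; 0; -5]);
        (15275, [:: 0; 0; 0; 0; 0; 0; 0; 1; 0]);
        (189, [:: 0; 3; -1; 1; 0; 0; -3; 0; 0]);
        (25, [:: 0; -3; -5; 5; 10; 0; 3; 0; -10]);
        (59, [:: 0; 1; 3; -3; 2; 0; -1; 0; -2]);
        (131, [:: 0; -1; -2; 2; 3; 0; 1; 0; -3]);
        (17, [:: 0; 1; 5; -5; 3; 0; -1; 0; -3]);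
        (141, [:: -7; -8; 10; 10; 4; 10; -8; -1; 4]);
        (209, [:: 0; 5; -1; 1; 1; 0; -5; 0; -1]);
        (13488, [:: 0; 1; 0; 0; 0; 0; -1; 0; 0]);
        (6617, [:: 0; 0; 0; 0; 1; 0; 0; 0; -1]);
        (392, [:: 0; 0; 1; -1; 0; 0; 0; 0; 0]);
        (5, [:: 0; 2; 10; -10; 6; 0; -2; 0; -6]);
        (13, [:: -6; -1; -9; -9; 2; 10; -1; 1; 2])];
  level := 97788 |}.

Definition C4_certificate : certificate := {|
  sos_block0 :=
    [:: (34, [:: 0; 3; 3; -3; 0; 0; -3; 0; 0]);
        (3, [:: 0; 10; 10; -10; 0; 0; -10; 0; 0]);
        (3, [:: -10; 3; 3; 3; 6; 2; 3; 2; 6]);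
        (123, [:: 0; 0; 0; 0; 3; 0; 0; 0; -3]);
        (9, [:: 0; 0; 0; 0; 10; 0; 0; 0; -10]);
        (68, [:: -3; -5; -5; -5; 2; 4; -5; 4; 2]);
        (1973, [:: 0; 0; 0; 0; 0; 1; 0; -1; 0]);
        (40, [:: 0; 0; 0; 0; 5; 0; 0; 0; -5]);
        (223, [:: 0; 0; 0; 0; 0; -3; 0; 3; 0]);
        (14, [:: -2; -3; -3; -3; 1; 3; -3; 3; 1]);
        (20, [:: 0; 0; 0; 0; 0; -10; 0; 10; 0]);
        (7, [:: -3; 1; 1; 1; 2; 1; 1; 1; 2]);
        (1037, [:: 0; 0; 0; 0; 1; 0; 0; 0; -1]);
        (11, [:: 0; 5; 5; -5; 0; 0; -5; 0; 0]);
        (80, [:: 0; 0; 0; 0; 0; -5; 0; 5; 0])];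
  sos_block1 :=
    [:: (9, [:: 0; 2; 10; -10; -10; 0; -2; 0; 10]);
        (54, [:: 0; -10; 1; -1; -1; 0; 10; 0; 1]);
        (39, [:: 3; 0; 2; 2; -2; -1; 0; 2; -2]);
        (2883, [:: 0; 0; 0; 0; 0; 0; 0; 1; 0]);
        (52, [:: 5; 6; -5; -5; -2; -10; 6; -3; -2]);
        (38, [:: 0; 1; 5; -5; -5; 0; -1; 0; 5]);
        (408, [:: 0; -5; 1; -1; -1; 0; 5; 0; 1]);
        (103, [:: 0; 1; 3; -3; -3; 0; -1; 0; 3]);
        (3238, [:: 0; 1; 0; 0; 0; 0; -1; 0; 0]);
        (108, [:: 0; 0; 1; -1; 0; 0; 0; 0; 0]);
        (44, [:: -2; 1; -3; -3; 1; -1; 1; 10; 1]);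
        (360, [:: 0; -3; 0; 0; 0; 0; 3; 0; 0])];
  level := 24744 |}.

End Certificates.

Lemma P3_certificate_valid : valid_certificate P3_types P3_certificate.
Proof. by vm_compute. Qed.

Lemma C4_certificate_valid : valid_certificate C4_types C4_certificate.
Proof. by vm_compute. Qed.

Section InducedEmbeddings.
Variables (k n : nat) (Gam : digraph k) (G : digraph n).

Definition induced_embedding (f : {ffun 'I_k -> 'I_n}) : bool :=
  injectiveb f && [forall i, forall j, ((f i, f j) \in G) == ((i, j) \in Gam)].

Definition induced_embeddings : {set {ffun 'I_k -> 'I_n}} := [set f | induced_embedding f].

Definition automorphism (s : {perm 'I_k}) : bool :=
  [forall i, forall j, ((s i, s j) \in Gam) == ((i, j) \in Gam)].

Lemma induced_embedding_arc f i j :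
  induced_embedding f -> ((f i, f j) \in G) = ((i, j) \in Gam).
Proof. by case/andP=> _ /forallP/(_ i)/forallP/(_ j)/eqP. Qed.

Lemma induced_embedding_aut f s : automorphism s -> induced_embedding f ->
  induced_embedding [ffun i => f (s i)].
Proof.
move=> /forallP aut_s f_emb; have /andP[/injectiveP f_inj _] := f_emb.
apply/andP; split.
  by apply/injectiveP => i j; rewrite !ffunE => /f_inj/perm_inj.
apply/forallP => i; apply/forallP => j; rewrite !ffunE induced_embedding_arc //.
exact: (forallP (aut_s i) j).
Qed.

Lemma card_induced_embeddings :
  #|induced_embeddings| =
  \sum_(T : {set 'I_n}) #|[set f in induced_embeddings | f @: [set: 'I_k] == T]|.
Proof.
rewrite -sum1_card (partition_big (fun f : {ffun 'I_k -> 'I_n} => f @: [set: 'I_k]) xpredT) //=.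
by apply: eq_bigr => T _; rewrite -sum1_card; apply: eq_bigl => f; rewrite inE.
Qed.

Variable A : {set {perm 'I_k}}.
Hypothesis A_aut : {in A, forall s, automorphism s}.

(* Precomposing with the automorphisms in [A] gives [#|A|] distinct embeddings
   with the same image. *)
Lemma card_aut_le_image_fiber f : induced_embedding f ->
  #|A| <= #|[set g in induced_embeddings | g @: [set: 'I_k] == f @: [set: 'I_k]]|.
Proof.
move=> f_emb; have /andP[/injectiveP f_inj _] := f_emb.
pose fs (s : {perm 'I_k}) : {ffun 'I_k -> 'I_n} := [ffun i => f (s i)].
have fs_inj : injective fs.
  move=> s t /ffunP eq_st; apply/permP => i.
  by apply: f_inj; have := eq_st i; rewrite !ffunE.
rewrite -(card_imset _ fs_inj); apply/subset_leq_card/fintype.subsetP => _ /imsetP[s sA ->].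
rewrite !inE induced_embedding_aut ?A_aut //=.
have im_s : s @: [set: 'I_k] = [set: 'I_k] by apply: im_perm_on; exact: subsetT_hint.
rewrite -[in X in _ == X]im_s -imset_comp.
by apply/eqP/eq_imset => i; rewrite ffunE.
Qed.

Lemma ind_count_aut_le : #|A| * ind_count Gam G <= #|induced_embeddings|.
Proof.
rewrite /ind_count card_induced_embeddings mulnC -sum_nat_const.
rewrite [X in _ <= X](bigID (mem [set T : {set 'I_n} | (#|T| == k) && induces_copy Gam G T])) /=.
apply: leq_trans (leq_addr _ _); apply: leq_sum => T.
rewrite inE => /andP[_ /existsP[f /and3P[f_inj /eqP <- f_arcs]]].
by apply: card_aut_le_image_fiber; rewrite /induced_embedding f_inj.
Qed.

End InducedEmbeddings.

Lemma ind_count_le_embeddings k n (Gam : digraph k) (G : digraph n) :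
  ind_count Gam G <= #|induced_embeddings Gam G|.
Proof.
rewrite -[ind_count _ _]mul1n -(cards1 (1%g : {perm 'I_k})).
apply: ind_count_aut_le => _ /set1P ->.
by apply/forallP => i; apply/forallP => j; rewrite !perm1.
Qed.

Section Rotations.
Local Open Scope ring_scope.

Lemma mem_C4 (i j : 'I_4) : ((i, j) \in C4) = (j == i + 1).
Proof.
by case: i => [[|[|[|[|i]]]] lti]; case: j => [[|[|[|[|j]]]] ltj];
  rewrite // !inE !xpair_eqE -!val_eqE /= ?inordK.
Qed.

Definition rotation (r : 'I_4) : {perm 'I_4} := perm (addrI r).

Lemma rotation_aut r : automorphism C4 (rotation r).
Proof.
apply/forallP => i; apply/forallP => j.
by rewrite !permE !mem_C4 -addrA (inj_eq (addrI r)).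
Qed.

Lemma card_rotations : #|[set rotation r | r : 'I_4]| = 4%N.
Proof.
rewrite card_imset ?card_ord // => r s /permP/(_ 0).
by rewrite !permE !addr0.
Qed.

End Rotations.

Lemma C4_ind_count_le_embeddings n (G : digraph n) :
  4 * ind_count C4 G <= #|induced_embeddings C4 G|.
Proof.
have := @ind_count_aut_le _ _ C4 G [set rotation r | r : 'I_4].
rewrite card_rotations; apply=> _ /imsetP[r _ ->]; exact: rotation_aut.
Qed.

Lemma C4_pattern_tuples n (G : digraph n) :
  #|induced_embeddings C4 G| <= #|[set w : {ffun 'I_4 -> 'I_n} | C4_types (tuple_types G w)]|.
Proof.
apply/subset_leq_card/fintype.subsetP => f; rewrite !inE => f_emb.
rewrite /C4_types /tuple_types /arc_type !(induced_embedding_arc _ _ f_emb).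
by rewrite /C4 !inE !xpair_eqE -!val_eqE /= !inordK.
Qed.

Definition extend_tuple n (f : {ffun 'I_3 -> 'I_n}) (v : 'I_n) : {ffun 'I_4 -> 'I_n} :=
  [ffun i : 'I_4 => if i < 3 then f (inord i) else v].

Lemma extend_tuple_inj n : injective (fun p : {ffun 'I_3 -> 'I_n} * 'I_n => extend_tuple p.1 p.2).
Proof.
move=> [f v] [f' v'] /= /ffunP eq_ext; congr pair.
  apply/ffunP => j; have := eq_ext (inord j).
  by rewrite !ffunE inordK ?ltn_ord ?inord_val // (ltn_trans (ltn_ord j)).
by have := eq_ext ord_max; rewrite !ffunE.
Qed.

(* Every induced copy of P3 lies in [n] pattern tuples: any fourth vertex will do. *)
Lemma P3_pattern_tuples n (G : digraph n) :
  n * #|induced_embeddings P3 G| <= #|[set w : {ffun 'I_4 -> 'I_n} | P3_types (tuple_types G w)]|.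
Proof.
rewrite -{1}[n]card_ord -cardsT mulnC -cardsX -(card_imset _ (@extend_tuple_inj n)).
apply/subset_leq_card/fintype.subsetP => _ /imsetP[[f v] /setXP[f_emb _] ->].
rewrite !inE in f_emb *.
rewrite /P3_types /tuple_types /extend_tuple /arc_type !ffunE !inordK //=.
rewrite !(induced_embedding_arc _ _ f_emb).
by rewrite /P3 !inE !xpair_eqE -!val_eqE /= !inordK.
Qed.

Lemma max_ind_attained k (Gam : digraph k) n :
  exists2 G : digraph n, is_orgraph G & max_ind Gam n = ind_count Gam G.
Proof.
have org0 : is_orgraph (finset.set0 : digraph n).
  by apply/forallP => i; apply/forallP => j; rewrite inE.
have [|G orG max_G] := @eq_bigmax_cond _ [pred G : digraph n | is_orgraph G] (ind_count Gam).
  by apply/card_gt0P; exists finset.set0.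
by exists G.
Qed.

(* The Weierstrass product inequality [n^_k >= n^k (1 - 'C(k, 2) / n)], cleared
   of denominators. *)
Lemma expn_bin2_le_ffact k n : n ^ k * (n - 'C(k, 2)) <= n * n ^_ k.
Proof.
elim: k => [|k IHk]; first by rewrite expn0 bin0n subn0 mul1n ffactn0 muln1.
rewrite ffactnSr binS bin1 expnSr.
have step : n * (n - ('C(k, 2) + k)) <= (n - 'C(k, 2)) * (n - k) by nia.
rewrite -mulnA (leq_trans (leq_mul (leqnn _) step)) // !mulnA.
by rewrite leq_mul2r IHk orbT.
Qed.

Lemma expn_le_ffact k n a b : 0 < n -> a * n <= b * (n - 'C(k, 2)) ->
  a * n ^ k <= b * n ^_ k.
Proof.
move=> n_gt0 le_ab; rewrite -(leq_pmul2l n_gt0) mulnCA mulnA.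
apply: leq_trans (leq_mul le_ab (leqnn (n ^ k))) _.
by rewrite -mulnA [X in _ <= X]mulnCA leq_mul2l mulnC expn_bin2_le_ffact orbT.
Qed.

Lemma P3_ind_count_le n (G : digraph n) : 0 < n -> is_orgraph G ->
  (24 * 60000 * Z.of_nat (ind_count P3 G) <= 97788 * Z.of_nat (n ^ 3))%Z.
Proof.
move=> n_gt0 orG.
have cert := pattern_tuples_le P3_types_local P3_certificate_valid orG.
have tuples := P3_pattern_tuples G.
have emb := ind_count_le_embeddings P3 G.
rewrite [level _]/= expnSr in cert.
nia.
Qed.

Lemma C4_ind_count_le n (G : digraph n) : is_orgraph G ->
  (4 * (24 * 60000) * Z.of_nat (ind_count C4 G) <= 24744 * Z.of_nat (n ^ 4))%Z.
Proof.
move=> orG.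
have cert := pattern_tuples_le C4_types_local C4_certificate_valid orG.
have tuples := C4_pattern_tuples G.
have emb := C4_ind_count_le_embeddings G.
rewrite [level _]/= in cert.
lia.
Qed.

Lemma P3_density n : 100 <= n -> max_ind P3 n * 10000 <= 4446 * 'C(n, 3).
Proof.
move=> n_ge; have n_gt0 : 0 < n by lia.
apply/ssrnat.leP/Nat2Z.inj_le.
rewrite !Nat2Z.inj_mul (_ : Z.of_nat 10000 = 10000%Z) // (_ : Z.of_nat 4446 = 4446%Z) //.
have [G orG ->] := max_ind_attained P3 n.
have := P3_ind_count_le n_gt0 orG.
have := @expn_le_ffact 3 n 97 100 n_gt0; rewrite (_ : 'C(3, 2) = 3) // => /(_ ltac:(lia)).
rewrite -bin_ffact (_ : 3`! = 6) //.
lia.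
Qed.

Lemma C4_density n : 100 <= n -> max_ind C4 n * 10000 <= 1104 * 'C(n, 4).
Proof.
move=> n_ge; apply/ssrnat.leP/Nat2Z.inj_le.
rewrite !Nat2Z.inj_mul (_ : Z.of_nat 10000 = 10000%Z) // (_ : Z.of_nat 1104 = 1104%Z) //.
have [G orG ->] := max_ind_attained C4 n.
have := C4_ind_count_le orG.
have := @expn_le_ffact 4 n 94 100 ltac:(lia); rewrite (_ : 'C(4, 2) = 6) // => /(_ ltac:(lia)).
rewrite -bin_ffact (_ : 4`! = 24) //.
lia.
Qed.

Local Open Scope ring_scope.

Lemma ler_nat_ratio (R : numFieldType) (m c a b : nat) : (0 < c)%N -> (0 < b)%N ->
  (m * b <= a * c)%N -> m%:R / c%:R <= a%:R / b%:R :> R.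
Proof.
move=> c_gt0 b_gt0 le_mb.
by rewrite ler_pdivrMr ?ltr0n // mulrAC ler_pdivlMr ?ltr0n // -!natrM ler_nat.
Qed.

Local Open Scope ereal_scope.

Lemma limn_esup_le_eventually (R : realType) (N : nat) (u : nat -> R) (c : R) :
  (forall n, (N <= n)%N -> (u n <= c)%R) -> limn_esup (fun n => (u n)%:E) <= c%:E.
Proof.
move=> le_uc; rewrite /limn_esup /limf_esup.
apply: le_trans (ereal_inf_lbound _) _.
  by exists [set n : nat | (N <= n)%N]%classic => //; exists N.
by apply: ge_ereal_sup => _ [n /= le_Nn <-]; rewrite lee_fin le_uc.
Qed.

Theorem theorem2 (R : realType) :
  inducibility R P3 <= ((4446%:R / 10000%:R : R))%:E /\
  inducibility R C4 <= ((1104%:R / 10000%:R : R))%:E.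
Proof.
rewrite /inducibility; split; apply: (limn_esup_le_eventually (N := 100)) => n n_ge;
  (apply: ler_nat_ratio; [by rewrite bin_gt0 (leq_trans _ n_ge) | by [] |]).
- exact: P3_density.
- exact: C4_density.
Qed.
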